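(* No flower is a Burling graph.
   Context: Graphs are finite, without loops or multiple edges. A hole in a graph is an induced cycle of length at least $4$. A flower is a graph $G$ consisting of a hole $H$ together with, for every edge $e$ of $H$, a hole $H_e$ of $G$ containing $e$, such that $V(H)\cap V(H_e)$ is exactly the set of the two endpoints of $e$; for all distinct edges $e,f$ of $H$, $V(H_e)\cap V(H_f)$ is the set of common endpoints of $e$ and $f$; and the vertices and edges of $G$ are exactly those of the holes $H_e$. In a rooted tree $T$ with root $r$, each non-root vertex $v$ has a parent $p(v)$; children, leaves, ancestors and descendants are as usual. A branch is a sequence $v_1\dots v_k$ ($k\ge0$) with $v_i$ the parent of $v_{i+1}$; it starts at $v_1$. A Burling tree is a 4-tuple $(T,r,\ell,c)$: $T$ a rooted tree with root $r$; $\ell$ assigns to each non-leaf vertex $v$ one of its children $\ell(v)$ (the last-born of $v$); $c$ assigns to every vertex $v$ that is neither the root nor a last-born the vertex-set of a (possibly empty) branch starting at $\ell(p(v))$, and $c(v)=\emptyset$ if $v$ is the root or a last-born. The oriented graph fully derived from it has vertex-set $V(T)$ and an arc $uv$ iff $v\in c(u)$. A (non-oriented) graph is a Burling graph if it is isomorphic to an induced subgraph of the underlying graph of the oriented graph fully derived from some Burling tree. *)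

(* Finite simple graphs are symmetric irreflexive relations
   [adj : rel V] on a finType V. *)
From mathcomp Require Import all_boot.
Set Implicit Arguments. Unset Strict Implicit. Unset Printing Implicit Defensive.

Section Graphs.
Variables (V : finType) (adj : rel V).

(* A hole: an induced cycle of length >= 4, given by its cyclic sequence of
   (distinct) vertices; two vertices of the hole are adjacent in G exactly
   when they are cyclically consecutive in the sequence. *)
Definition is_hole (s : seq V) : Prop :=
  [/\ uniq s, 4 <= size s &
    forall x y, x \in s -> y \in s ->
      adj x y = (index y s == (index x s).+1 %% size s)
             || (index x s == (index y s).+1 %% size s)].

(* The edges of a hole s, each given as its (2-element) set of endpoints
   (the hole is induced, so its edges are the G-edges inside it). *)
Definition hole_edges (s : seq V) : {set {set V}} :=
  [set [set x; y] | x in s, y in s & adj x y].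

Definition flower : Prop :=
  exists (H : seq V) (He : {set V} -> seq V),
  [/\ is_hole H,
      (forall e, e \in hole_edges H ->
         [/\ is_hole (He e), e \subset [set z in He e] &
             [set z in H] :&: [set z in He e] = e]),
      (forall e f, e \in hole_edges H -> f \in hole_edges H -> e != f ->
         [set z in He e] :&: [set z in He f] = e :&: f),
      (forall v, exists2 e, e \in hole_edges H & v \in He e) &
      (forall u v, adj u v ->
         exists2 e, e \in hole_edges H & (u \in He e) && (v \in He e))].
End Graphs.

(* The rooted tree T is given by its root r
   and a parent function par with par r = r, every vertex reaching r by
   iterating par; the children of v are the u <> r with par u = v.
   [l] is the last-born map (only meaningful on non-leaves), [c] the map c. *)
Definition burling_tree (U : finType) (r : U) (par l : U -> U)
  (c : U -> {set U}) : Prop :=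
  [/\ par r = r,
      (forall v, exists n, iter n par v = r),
      (forall v, (exists u, (u != r) && (par u == v)) ->
                 l v != r /\ par (l v) = v),
      (forall v, (v == r) || (l (par v) == v) -> c v = set0) &
      (forall v, v != r -> l (par v) != v ->
         exists s : seq U, c v = [set x in s] /\
           (s = [::] \/
            exists t, s = l (par v) :: t /\
              path (fun a b => (b != r) && (par b == a)) (l (par v)) t))].

(* Underlying (non-oriented) graph of the oriented graph fully derived from
   a Burling tree: arc uv iff v \in c u. *)
Definition burling_adj (U : finType) (c : U -> {set U}) : rel U :=
  fun u v => (v \in c u) || (u \in c v).

Definition burling_graph (V : finType) (adj : rel V) : Prop :=
  exists (U : finType) (r : U) (par l : U -> U) (c : U -> {set U}),
    burling_tree r par l c /\
    exists f : V -> U, injective f /\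
      forall x y, adj x y = burling_adj c (f x) (f y).

(* Adjacent vertices of a Burling graph are incomparable in its tree, and an
   edge pq with q strictly below x and p not below x is an arc p -> x; so a
   walk leaving the subtree of x passes through a neighbour of x.  Taking a
   vertex of minimum depth shows that every hole contains a vertex t0 strictly
   above another of its vertices; then t0 lies above the whole hole except its
   two neighbours, each of which has arcs to t0 and to the next vertex.  Walking
   the central hole H of a flower from such a t0, each of the two petals at t0
   contains a vertex outside H strictly above t0.  Each of these two vertices
   has no neighbour in the other petal, hence lies above all of it; so they are
   equal, although the two petals only share t0. *)

From mathcomp Require Import all_boot zify.

Set Implicit Arguments. Unset Strict Implicit. Unset Printing Implicit Defensive.

Lemma discrete_ivt (P : pred nat) i j : i <= j -> P i != P j ->
  exists2 k, i <= k < j & P k != P k.+1.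
Proof.
elim: j => [|j IHj]; first by rewrite leqn0 => /eqP ->; rewrite eqxx.
rewrite leq_eqVlt => /predU1P[-> | lt_ij]; first by rewrite eqxx.
have [Pj|Pj] := eqVneq (P j) (P j.+1); last by exists j => //; rewrite ltnSn andbT.
rewrite -Pj => /(IHj lt_ij) [k /andP[ik kj] Pk].
by exists k; rewrite // ik ltnW.
Qed.

Lemma eqn_modS n i j : i < n -> j < n -> j == i.+1 %[mod n] ->
  j = i.+1 \/ j = 0 /\ i = n.-1.
Proof.
move=> lt_in lt_jn; rewrite (modn_small lt_jn).
have [lt_Sin|le_nSi] := ltnP i.+1 n; first by rewrite modn_small // => /eqP; left.
by rewrite (_ : i.+1 = n) ?modnn => [/eqP|]; [right|]; lia.
Qed.

(** * Walking around a hole *)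

Section HoleWalk.
Variables (V : finType) (adj : rel V).
Hypothesis adj_sym : symmetric adj.

Record hole_walk (X : seq V) (m : nat) (t : nat -> V) : Prop := HoleWalk {
  hw_size : 4 <= m;
  hw_wrap : t m = t 0;
  hw_mem : forall i, i < m -> t i \in X;
  hw_onto : forall x, x \in X -> exists2 i, i < m & t i = x;
  hw_inj : forall i j, i < m -> j < m -> t i = t j -> i = j;
  hw_adj : forall i, i < m -> adj (t i) (t i.+1);
  hw_chordless : forall i j, i < m -> j < m -> adj (t i) (t j) ->
    [|| j == i.+1, i == j.+1, (i == 0) && (j == m.-1) | (j == 0) && (i == m.-1)] }.

Lemma hole_walk_from X a : is_hole adj X -> a \in X ->
  exists m t, hole_walk X m t /\ t 0 = a.
Proof.
case=> uniqX size4 adjX aX; set n := size X in size4 adjX.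
have n_gt0 : 0 < n by lia.
pose t k := nth a X ((index a X + k) %% n).
have t_mem k : t k \in X by rewrite mem_nth // ltn_pmod.
have index_t k : index (t k) X = (index a X + k) %% n.
  by rewrite index_uniq // ltn_pmod.
have t_adj i j : adj (t i) (t j) = (j == i.+1 %[mod n]) || (i == j.+1 %[mod n]).
  have modS k : (k %% n).+1 %% n = k.+1 %% n by rewrite -addn1 modnDml addn1.
  by rewrite adjX ?t_mem // !index_t !modS -!addnS !eqn_modDl.
exists n, t; split; last by rewrite /t addn0 modn_small ?index_mem ?nth_index.
split=> //.
- by rewrite /t modnDr addn0.
- move=> x xX; exists ((index x X + (n - index a X)) %% n); first exact: ltn_pmod.
  have lt_xn : index x X < n by rewrite index_mem.
  have lt_an : index a X < n by rewrite index_mem.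
  by rewrite /t modnDmr addnCA subnKC ?modnDr ?modn_small ?nth_index // ltnW.
- move=> i j lt_in lt_jn /(congr1 (index^~ X)); rewrite !index_t => /eqP.
  by rewrite eqn_modDl !modn_small // => /eqP.
- by move=> i _; rewrite t_adj eqxx.
- move=> i j lt_in lt_jn; rewrite t_adj.
  by case/orP=> [/(eqn_modS lt_in lt_jn) | /(eqn_modS lt_jn lt_in)]; lia.
Qed.

Section Walk.
Variables (X : seq V) (m : nat) (t : nat -> V).
Hypothesis W : hole_walk X m t.

Lemma hw_mem_le i : i <= m -> t i \in X.
Proof.
rewrite leq_eqVlt => /predU1P[->|]; last exact: hw_mem.
by rewrite (hw_wrap W) (hw_mem W) // (leq_trans _ (hw_size W)).
Qed.

Lemma hw_neq i j : i < m -> j < m -> i != j -> t i != t j.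
Proof. by move=> im jm; apply: contra_neq; apply: (hw_inj W im jm). Qed.

Lemma hw_adj_last : adj (t m.-1) (t 0).
Proof.
have m_gt0 : 0 < m by move: (hw_size W); lia.
by rewrite -(hw_wrap W) -{2}(prednK m_gt0) (hw_adj W) // prednK.
Qed.

Lemma hw_adj0 j : j < m -> adj (t 0) (t j) -> (j == 1) || (j == m.-1).
Proof.
move=> jm; have m0 : 0 < m by move: (hw_size W); lia.
by move/(hw_chordless W m0 jm); lia.
Qed.

Lemma hw_adj1 j : j < m -> adj (t 1) (t j) -> (j == 0) || (j == 2).
Proof.
move=> jm; have m4 := hw_size W; have m1 : 1 < m by lia.
by move/(hw_chordless W m1 jm); lia.
Qed.

Lemma hw_nonadj0 j : j < m -> t j != t 0 -> ~~ adj (t 0) (t j) -> 1 < j /\ j.+1 < m.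
Proof.
move=> jm j_neq0 nadj; have m4 := hw_size W.
have j0 : j != 0 by apply: contra_neq j_neq0 => ->.
have j1 : j != 1 by apply: contraNneq nadj => ->; apply: (hw_adj W); lia.
have jm1 : j != m.-1 by apply: contraNneq nadj => ->; rewrite adj_sym hw_adj_last.
by split; lia.
Qed.

Definition rev_walk k := t (if k == 0 then 0 else m - k).

Lemma hole_walk_rev : hole_walk X m rev_walk.
Proof.
have m4 := hw_size W; rewrite /rev_walk.
have idx_lt k : k < m -> (if k == 0 then 0 else m - k) < m by case: eqP; lia.
split=> //.
- by rewrite subnn; case: eqP.
- by move=> i /idx_lt; apply: hw_mem.
- move=> x /(hw_onto W) [i lt_im <-{x}]; exists (if i == 0 then 0 else m - i).
    exact: idx_lt.
  case: (i =P 0) => [-> //|i0].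
  by rewrite (_ : (m - i == 0) = false) ?subKn //; lia.
- move=> i j /[dup] lt_im /idx_lt ? /[dup] lt_jm /idx_lt ? /(hw_inj W).
  by case: eqP; case: eqP; lia.
- move=> i lt_im; rewrite adj_sym /=.
  have -> : t (if i == 0 then 0 else m - i) = t (m - i).
    by case: eqP => [->|]; rewrite ?subn0 ?(hw_wrap W).
  by rewrite -(subnSK lt_im) (hw_adj W) //; lia.
- move=> i j /[dup] lt_im /idx_lt ? /[dup] lt_jm /idx_lt ? /(hw_chordless W).
  by case: eqP; case: eqP; lia.
Qed.

End Walk.

Lemma hole_walk_edge X a b : is_hole adj X -> a \in X -> b \in X -> adj a b ->
  exists m t, [/\ hole_walk X m t, t 0 = a & t 1 = b].
Proof.
move=> holeX aX bX ab; have [m [t [W t0]]] := hole_walk_from holeX aX.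
have [j jm tj] := hw_onto W bX; rewrite -t0 -tj in ab.
have /orP[/eqP j1|/eqP jm1] := hw_adj0 W jm ab; first by exists m, t; rewrite -j1.
exists m, (rev_walk m t); split=> //; first exact: hole_walk_rev.
by rewrite /rev_walk /= subn1 -jm1.
Qed.

End HoleWalk.

(** * Burling trees *)

Section BurlingTree.
Variables (U : finType) (r : U) (par l : U -> U) (c : U -> {set U}).
Hypothesis par_root : par r = r.
Hypothesis root_reachable : forall v, exists n, iter n par v = r.
Hypothesis last_born_child : forall v, (exists u, (u != r) && (par u == v)) ->
  l v != r /\ par (l v) = v.
Hypothesis c_root_last_born : forall v, (v == r) || (l (par v) == v) -> c v = set0.
Hypothesis c_branch : forall v, v != r -> l (par v) != v ->
  exists s : seq U, c v = [set x in s] /\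
    (s = [::] \/ exists t, s = l (par v) :: t /\
       path (fun a b => (b != r) && (par b == a)) (l (par v)) t).

Definition anc x y := fconnect par y x.

Lemma anc_refl x : anc x x. Proof. exact: connect0. Qed.

Lemma anc_trans y x z : anc x y -> anc y z -> anc x z.
Proof. by move=> xy yz; apply: connect_trans yz xy. Qed.

Lemma anc_par x : anc (par x) x. Proof. exact: fconnect1. Qed.

Lemma ancE x y : anc x y = (x == y) || anc x (par y).
Proof. by rewrite /anc fconnect_eqVf eq_sym. Qed.

Lemma anc_total x y z : anc x z -> anc y z -> anc x y || anc y x.
Proof.
move=> /iter_findex xz /iter_findex yz.
case: (leqP (findex par z x) (findex par z y)) => [le_xy|/ltnW le_yx].
  by rewrite /anc -yz -(subnK le_xy) iterD xz fconnect_iter orbT.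
by rewrite /anc -xz -(subnK le_yx) iterD yz fconnect_iter.
Qed.

Lemma iter_par_root n : iter n par r = r.
Proof. by elim: n => //= n ->. Qed.

Lemma exists_root_iter v : exists n, iter n par v == r.
Proof. by have [n /eqP] := root_reachable v; exists n. Qed.

Definition depth v := ex_minn (exists_root_iter v).

Lemma depth_par v : v != r -> depth v = (depth (par v)).+1.
Proof.
rewrite /depth => v_neq_r.
case: ex_minnP => n /eqP vn min_n; case: ex_minnP => k /eqP pk min_k.
case: n vn min_n => [/= vr|n]; first by rewrite vr eqxx in v_neq_r.
rewrite iterSr => vn min_n; congr _.+1; apply/eqP; rewrite eqn_leq min_k ?vn //=.
by rewrite -ltnS min_n // iterSr pk.
Qed.

Lemma anc_depth x y : anc x y -> x != y -> depth x < depth y.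
Proof.
move=> /iter_findex; move: (findex _ _ _) => n; elim: n y => [|n IHn] y.
  by move=> /= ->; rewrite eqxx.
rewrite iterSr => xy x_neq_y; have [yr|y_neq_r] := eqVneq y r.
  by rewrite yr par_root iter_par_root in xy; rewrite -xy yr eqxx in x_neq_y.
rewrite (depth_par y_neq_r) ltnS; have [->|] := eqVneq x (par y); first by [].
by move/(IHn _ xy)/ltnW.
Qed.

Lemma anc_antisym x y : anc x y -> anc y x -> x = y.
Proof.
move=> xy yx; apply/eqP; apply: contraT => x_neq_y.
by rewrite -(ltnn (depth x)) (ltn_trans (anc_depth xy x_neq_y)) // anc_depth // eq_sym.
Qed.

Lemma anc_sibling x y : x != r -> y != r -> par x = par y -> anc x y -> x = y.
Proof.
move=> xr yr pxy xy; apply/eqP; apply: contraT => x_neq_y.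
by have := anc_depth xy x_neq_y; rewrite (depth_par xr) (depth_par yr) pxy ltnn.
Qed.

Definition child a b := (b != r) && (par b == a).

Lemma mem_branch h t : path child h t ->
  forall v, (v \in h :: t) = anc h v && anc v (last h t).
Proof.
elim: t h => [|h' t IHt] h /=.
  move=> _ v; rewrite inE; apply/eqP/andP => [->|[hv vh]].
    by rewrite anc_refl.
  exact: anc_antisym.
case/andP => /andP[_ /eqP ph'] path_t v.
have hh' : anc h h' by rewrite -ph' anc_par.
have h'L : anc h' (last h' t).
  by have := IHt h' path_t h'; rewrite mem_head anc_refl => /= <-.
rewrite inE IHt //; have [->|v_neq_h] := eqVneq v h.
  by rewrite anc_refl (anc_trans hh' h'L).
apply/andP/andP => [[h'v vL]|[hv vL]]; first by split; first exact: anc_trans hh' h'v.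
split=> //; have /orP[//|] := anc_total h'L vL.
rewrite ancE ph' => /orP[/eqP-> | vh]; first exact: anc_refl.
by rewrite (anc_antisym vh hv) eqxx in v_neq_h.
Qed.

Lemma c_sibling u v : v \in c u ->
  [/\ u != r, l (par u) != u, l (par u) != r & par (l (par u)) = par u].
Proof.
have [/c_root_last_born->|/norP[ur lu] _] := boolP ((u == r) || (l (par u) == u)).
  by rewrite inE.
have [] // := last_born_child (ex_intro _ u _ : exists w, (w != r) && (par w == par u)).
by rewrite ur eqxx.
Qed.

Lemma c_interval u v : v \in c u ->
  exists b, c u = [set x | anc (l (par u)) x && anc x b].
Proof.
move=> vin; have [ur lu _ _] := c_sibling vin.
have [s [cE [s0|[t [sE path_t]]]]] := c_branch ur lu; first by rewrite cE s0 inE in vin.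
exists (last (l (par u)) t); apply/setP => x.
by rewrite cE sE !inE -(mem_branch path_t).
Qed.

Lemma c_desc u v : v \in c u -> anc (l (par u)) v.
Proof. by move=> vin; have [b cE] := c_interval vin; move: vin; rewrite cE inE => /andP[]. Qed.

Lemma c_desc_par u v : v \in c u -> anc (par u) v.
Proof.
move=> vin; have [_ _ _ plu] := c_sibling vin.
by rewrite -plu; apply: anc_trans (anc_par _) (c_desc vin).
Qed.

Lemma c_total u v w : v \in c u -> w \in c u -> anc v w || anc w v.
Proof.
move=> vin; have [b cE] := c_interval vin; rewrite cE !inE in vin *.
by case/andP: vin => _ vb /andP[_ wb]; apply: anc_total vb wb.
Qed.

Lemma c_convex u v x : v \in c u -> anc (l (par u)) x -> anc x v -> x \in c u.
Proof.
move=> vin lx xv; have [b cE] := c_interval vin; rewrite cE !inE in vin *.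
by rewrite lx; case/andP: vin => _; apply: anc_trans xv.
Qed.

Lemma arc_incomparable u v : v \in c u -> ~~ anc u v && ~~ anc v u.
Proof.
move=> vin; have [ur lu lr plu] := c_sibling vin; have lv := c_desc vin.
apply/andP; split; apply/negP.
- move=> uv; case/orP: (anc_total uv lv).
    by move/(anc_sibling ur lr (esym plu))/esym/eqP; rewrite (negbTE lu).
  by move/(anc_sibling lr ur plu)/eqP; rewrite (negbTE lu).
- by move=> vu; move: lu; rewrite (anc_sibling lr ur plu (anc_trans lv vu)) eqxx.
Qed.

Lemma burling_adj_incomparable u v : burling_adj c u v -> ~~ anc u v.
Proof. by case/orP => /arc_incomparable /andP[]. Qed.

Lemma arc_to_anc x p q : ~~ anc x p -> anc x q -> q != x -> burling_adj c p q ->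
  x \in c p /\ q \in c p.
Proof.
move=> xp xq qx /orP[qin|pin]; last first.
  have [_ _ _ plq] := c_sibling pin.
  move: xq; rewrite ancE eq_sym (negbTE qx) /= => xpq.
  by rewrite (anc_trans xpq (c_desc_par pin)) in xp.
split=> //; have [_ _ _ plp] := c_sibling qin.
case/orP: (anc_total (c_desc qin) xq) => [lx|]; first exact: c_convex qin lx xq.
rewrite ancE plp => /orP[/eqP ->|xpp]; first exact: c_convex qin (anc_refl _) (c_desc qin).
by rewrite (anc_trans xpp (anc_par p)) in xp.
Qed.

Lemma depth_last_sibling u v : v \in c u -> depth (l (par u)) = depth u.
Proof.
move=> vin; have [ur _ lr plu] := c_sibling vin.
by rewrite (depth_par ur) (depth_par lr) plu.
Qed.

Lemma arc_depth u v : v \in c u -> depth u <= depth v.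
Proof.
move=> vin; rewrite -(depth_last_sibling vin).
have [->//|/(anc_depth (c_desc vin))] := eqVneq (l (par u)) v.
exact: ltnW.
Qed.

Lemma arc_depth_eq u v : v \in c u -> depth v <= depth u -> c v = set0.
Proof.
move=> vin; have [_ _ _ plu] := c_sibling vin.
have [<-|/(anc_depth (c_desc vin))] := eqVneq (l (par u)) v; last first.
  by rewrite (depth_last_sibling vin) => /leq_trans lt_vu /lt_vu; rewrite ltnn.
by move=> _; apply: c_root_last_born; rewrite plu eqxx orbT.
Qed.

Lemma arc_chain_not_anc u v w : v \in c u -> w \in c v -> ~~ anc w u.
Proof.
move=> vin win; apply/negP => wu.
have [_ _ lr plu] := c_sibling vin; have [vr _ _ _] := c_sibling win.
have /andP[nuv nvu] := arc_incomparable vin.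
have pv_pu : anc (par v) (par u).
  move: (anc_trans (c_desc_par win) wu); rewrite ancE => /orP[/eqP pvu|//].
  by rewrite -pvu anc_par in nuv.
have pu_pv : anc (par u) (par v).
  move: (c_desc_par vin); rewrite ancE => /orP[/eqP puv|//].
  by rewrite -puv anc_par in nvu.
have ppE := anc_antisym pu_pv pv_pu.
have luv : l (par u) = v.
  by apply: anc_sibling lr vr _ (c_desc vin); rewrite plu.
by move: win; rewrite c_root_last_born ?inE // -ppE luv eqxx orbT.
Qed.


(** * Holes in a Burling graph *)

Section BurlingGraph.
Variables (V : finType) (adj : rel V) (f : V -> U).
Hypothesis adj_sym : symmetric adj.
Hypothesis f_inj : injective f.
Hypothesis adjE : forall x y, adj x y = burling_adj c (f x) (f y).

Lemma adj_incomparable x y : adj x y -> ~~ anc (f x) (f y).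
Proof. by rewrite adjE; apply: burling_adj_incomparable. Qed.

Lemma adj_anc_cross x p q : adj p q -> q != x ->
  anc (f x) (f q) -> ~~ anc (f x) (f p) ->
  [/\ adj p x, f x \in c (f p) & f q \in c (f p)].
Proof.
rewrite adjE => pq qx xq xp.
have [xin qin] := arc_to_anc xp xq (contra_neq (@f_inj q x) qx) pq.
by rewrite adjE /burling_adj xin.
Qed.

Lemma walk_cross (t : nat -> V) x i j : i <= j ->
  (forall k, i <= k < j -> adj (t k) (t k.+1)) -> (forall k, i <= k <= j -> t k != x) ->
  anc (f x) (f (t i)) != anc (f x) (f (t j)) -> exists2 k, i <= k <= j & adj (t k) x.
Proof.
move=> ij walk_t t_neq_x /(@discrete_ivt (fun k => anc (f x) (f (t k))) _ _ ij).
case=> k /andP[ik kj]; have adj_k := walk_t k (introT andP (conj ik kj)).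
have tk_neq_x : t k != x by rewrite t_neq_x // ik ltnW.
have tSk_neq_x : t k.+1 != x by rewrite t_neq_x // kj (leq_trans ik).
case: (boolP (anc (f x) (f (t k)))) => xk; case: (boolP (anc (f x) (f (t k.+1)))) => xSk // _.
- rewrite adj_sym in adj_k; have [] := adj_anc_cross adj_k tk_neq_x xk xSk.
  by exists k.+1; rewrite // kj (leq_trans ik).
- have [] := adj_anc_cross adj_k tSk_neq_x xSk xk.
  by exists k; rewrite // ik ltnW.
Qed.

Definition has_desc (X : seq V) a := has (fun w => (w != a) && anc (f a) (f w)) X.

Lemma c_pair_has_desc X z v w : v \in X -> w \in X -> v != w ->
  f v \in c (f z) -> f w \in c (f z) -> exists2 a, a \in X & has_desc X a.
Proof.
move=> vX wX vw vin win; case/orP: (c_total vin win) => [vw'|wv'].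
  by exists v => //; apply/hasP; exists w; rewrite // eq_sym vw.
by exists w => //; apply/hasP; exists v; rewrite // vw.
Qed.

Lemma hole_has_desc X : is_hole adj X -> exists2 a, a \in X & has_desc X a.
Proof.
move=> holeX; have [x0 x0X] : exists x0, x0 \in X.
  by case: holeX; case: X => // x X _ _ _; exists x; rewrite mem_head.
case: (arg_minnP (fun v => depth (f v)) x0X) => u uX u_min.
have [m [t [W t0]]] := hole_walk_from holeX uX.
have [m0 m1 m2 mm] : [/\ 0 < m, 1 < m, 2 < m & m.-1 < m] by have := hw_size W; split; lia.
have adj01 : adj (t 0) (t 1) := hw_adj W m0.
have adj12 : adj (t 1) (t 2) := hw_adj W m1.
(* [u] has minimum depth: if it has no out-arc then [t 1] has arcs to [u] and
   [t 2], otherwise [u] has arcs to both its neighbours. *)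
have [c0|cn] := eqVneq (c (f u)) set0.
- have u_in : f u \in c (f (t 1)).
    by move: adj01; rewrite t0 adj_sym adjE /burling_adj c0 inE orbF.
  have t2_in : f (t 2) \in c (f (t 1)).
    move: adj12; rewrite adjE => /orP[//|t1_in].
    have := arc_depth_eq t1_in (leq_trans (arc_depth u_in) (u_min _ (hw_mem W m2))).
    by move=> c1; rewrite c1 inE in u_in.
  apply: (c_pair_has_desc uX (hw_mem W m2) _ u_in t2_in).
  by rewrite -t0 (hw_neq W).
- have out y : y \in X -> adj u y -> f y \in c (f u).
    move=> yX; rewrite adjE => /orP[//|u_in].
    by rewrite (arc_depth_eq u_in (u_min _ yX)) eqxx in cn.
  have t1X := hw_mem W m1; have tmX := hw_mem W mm.
  apply: (c_pair_has_desc t1X tmX _ (out _ t1X _) (out _ tmX _)).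
  + by rewrite (hw_neq W) //; have := hw_size W; lia.
  + by rewrite -t0.
  + by rewrite -t0 adj_sym (hw_adj_last W).
Qed.

Lemma hole_walk_apex X m t : hole_walk adj X m t -> has_desc X (t 0) ->
  [/\ forall k, 1 < k -> k.+1 < m -> anc (f (t 0)) (f (t k)),
      f (t 0) \in c (f (t 1)) & f (t 2) \in c (f (t 1))].
Proof.
move=> W /hasP[_ /(hw_onto W)[j jm <-] /andP[j_neq0 t0j]]; have m4 := hw_size W.
have [j1 jm1] : 1 < j /\ j.+1 < m.
  apply: (hw_nonadj0 adj_sym W jm j_neq0); apply: contraTN t0j.
  exact: adj_incomparable.
(* Leaving the subtree of [t 0] between [t 2] and [t m.-2] would need a
   neighbour of [t 0] there. *)
have const i k : 1 < i -> i <= k -> k.+1 < m ->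
    anc (f (t 0)) (f (t i)) = anc (f (t 0)) (f (t k)).
  move=> i1 ik km; apply/eqP/negP => /negP /(walk_cross ik) [].
  - by move=> n /andP[? ?]; apply: (hw_adj W); lia.
  - by move=> n /andP[? ?]; apply: (hw_neq W); lia.
  - move=> n /andP[? ?]; rewrite adj_sym => /(hw_adj0 W) /implyP; apply; lia.
have desc_mid k : 1 < k -> k.+1 < m -> anc (f (t 0)) (f (t k)).
  move=> k1 km; case: (leqP j k) => [jk|/ltnW kj]; first by rewrite -(const j k).
  by rewrite (const k j).
have t2_neq0 : t 2 != t 0 by apply: (hw_neq W); lia.
have adj01 : adj (t 0) (t 1) by apply: (hw_adj W); lia.
have adj12 : adj (t 1) (t 2) by apply: (hw_adj W); lia.
have t0t2 := desc_mid 2 isT m4.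
by have [] := adj_anc_cross adj12 t2_neq0 t0t2 (adj_incomparable adj01).
Qed.

Lemma hole_walk_exit X m t x : hole_walk adj X m t -> x \notin X ->
  anc (f x) (f (t 2)) -> ~~ anc (f x) (f (t 0)) ->
  exists2 p, p \in X & (p != t 1) && adj p x.
Proof.
move=> W xX xt2 xt0; have m4 := hw_size W.
have walk_t k : 2 <= k < m -> adj (t k) (t k.+1).
  by case/andP=> _; apply: (hw_adj W).
have t_neq_x k : 2 <= k <= m -> t k != x.
  by case/andP=> _ km; apply: contraNneq xX => <-; apply: (hw_mem_le W).
have cross : anc (f x) (f (t 2)) != anc (f x) (f (t m)).
  by rewrite (hw_wrap W) xt2 (negbTE xt0).
have m2 : 2 <= m by lia.
have [k /andP[k2 km] adj_kx] := walk_cross m2 walk_t t_neq_x cross.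
exists (t k); first exact: (hw_mem_le W).
rewrite adj_kx andbT; have [->|km'] := eqVneq k m.
  by rewrite (hw_wrap W) (hw_neq W); lia.
by rewrite (hw_neq W); lia.
Qed.

Lemma hole_desc_all X x y : is_hole adj X -> x \notin X -> y \in X ->
  anc (f x) (f y) -> {in X, forall p, ~~ adj p x} -> {in X, forall z, anc (f x) (f z)}.
Proof.
move=> holeX xX yX xy no_adj z zX.
have [m [t [W t0]]] := hole_walk_from holeX yX.
have [j jm <-] := hw_onto W zX; apply/negPn/negP => nxj.
have walk_t k : 0 <= k < j -> adj (t k) (t k.+1).
  by case/andP=> _ kj; apply: (hw_adj W); lia.
have t_mem k : 0 <= k <= j -> t k \in X by case/andP=> _ kj; apply: (hw_mem W); lia.
have t_neq_x k : 0 <= k <= j -> t k != x.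
  by move/t_mem; apply: contraTneq => ->.
have cross : anc (f x) (f (t 0)) != anc (f x) (f (t j)) by rewrite t0 xy (negbTE nxj).
have [k kj] := walk_cross (leq0n j) walk_t t_neq_x cross.
by apply/negP; apply: no_adj; apply: t_mem.
Qed.


(** * Flowers *)

Section Flower.
Variables (H : seq V) (He : {set V} -> seq V).
Hypothesis H_hole : is_hole adj H.
Hypothesis petal_spec : forall e, e \in hole_edges adj H ->
  [/\ is_hole adj (He e), e \subset [set z in He e] & [set z in H] :&: [set z in He e] = e].
Hypothesis petals_meet : forall e e', e \in hole_edges adj H -> e' \in hole_edges adj H ->
  e != e' -> [set z in He e] :&: [set z in He e'] = e :&: e'.
Hypothesis petal_cover : forall u v, adj u v ->
  exists2 e, e \in hole_edges adj H & (u \in He e) && (v \in He e).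

Lemma hole_edge_set2 x y : x \in H -> y \in H -> adj x y -> [set x; y] \in hole_edges adj H.
Proof. by move=> xH yH xy; apply/imset2P; exists x y; rewrite // inE yH xy. Qed.

Lemma petal_hole e : e \in hole_edges adj H -> is_hole adj (He e).
Proof. by case/petal_spec. Qed.

Lemma mem_edge_petal e z : e \in hole_edges adj H -> z \in e -> z \in He e.
Proof. by case/petal_spec => _ /subsetP sub _ /sub; rewrite inE. Qed.

Lemma mem_H_petal e z : e \in hole_edges adj H -> (z \in H) && (z \in He e) = (z \in e).
Proof. by case/petal_spec => _ _ /setP /(_ z); rewrite !inE. Qed.

Lemma mem_edge_H e z : e \in hole_edges adj H -> z \in e -> z \in H.
Proof. by move=> eH; rewrite -(mem_H_petal z eH) => /andP[]. Qed.

Lemma mem_petals e e' z : e \in hole_edges adj H -> e' \in hole_edges adj H -> e != e' ->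
  z \in He e -> z \in He e' -> z \in e :&: e'.
Proof. by move=> eH e'H ee' ze ze'; rewrite -(petals_meet eH e'H ee') !inE ze ze'. Qed.

Lemma petal_nbr e w z : e \in hole_edges adj H -> w \in He e -> w \notin H -> adj w z ->
  z \in He e.
Proof.
move=> eH we wH /petal_cover[e' e'H /andP[we' ze']].
have [->//|ee'] := eqVneq e e'.
have := mem_petals eH e'H ee' we we'; rewrite inE => /andP[/(mem_edge_H eH)].
by rewrite (negbTE wH).
Qed.

Lemma adj_H_petal e x p : e \in hole_edges adj H -> x \in H -> p \in He e -> adj x p ->
  (p \in e) || (x \in e).
Proof.
move=> eH xH pe xp; case: (boolP (p \in H)) => [pH|pH].
  by rewrite -(mem_H_petal p eH) pH pe.
by rewrite -(mem_H_petal x eH) xH (petal_nbr eH pe pH) ?orbT // adj_sym.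
Qed.

Lemma petal_no_desc m t : hole_walk adj H m t -> has_desc H (t 0) ->
  ~~ has_desc (He [set t 0; t 1]) (t 0).
Proof.
move=> W H_desc; set e := [set t 0; t 1].
have [m0 m1 m2] : [/\ 0 < m, 1 < m & 2 < m] by have := hw_size W; split; lia.
apply/hasP => -[w wC /andP[w_neq0 t0w]].
have adj01 : adj (t 0) (t 1) := hw_adj W m0.
have eH : e \in hole_edges adj H := hole_edge_set2 (hw_mem W m0) (hw_mem W m1) adj01.
have t0C : t 0 \in He e by rewrite (mem_edge_petal eH) // set21.
have t1C : t 1 \in He e by rewrite (mem_edge_petal eH) // set22.
have [m' [s [Ws s0 s1]]] := hole_walk_edge adj_sym (petal_hole eH) t0C t1C adj01.
have m'2 : 2 < m' := ltnW (hw_size Ws); have m'1 := ltnW m'2; have m'0 := ltnW m'1.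
have [t_mid _ t2_in] := hole_walk_apex W H_desc.
have s_desc : has_desc (He e) (s 0) by apply/hasP; exists w; rewrite // s0 w_neq0.
have [s_mid _ s2_in] := hole_walk_apex Ws s_desc.
rewrite s0 in s_mid; rewrite s1 in s2_in.
have t0t2 := t_mid 2 isT (hw_size W); have t0s2 := s_mid 2 isT (hw_size Ws).
have t2_neq0 : t 2 != t 0 by rewrite (hw_neq W).
have s2_neq0 : s 2 != t 0 by rewrite -s0 (hw_neq Ws).
have t2e : t 2 \notin e by rewrite !inE negb_or !(hw_neq W).
have s2e : s 2 \notin e by rewrite !inE -s0 -s1 negb_or !(hw_neq Ws).
have t2C : t 2 \notin He e.
  by apply: contra t2e => t2C; rewrite -(mem_H_petal _ eH) (hw_mem W m2) t2C.
have s2H : s 2 \notin H.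
  by apply: contra s2e => s2H; rewrite -(mem_H_petal _ eH) s2H (hw_mem Ws m'2).
have not_anc0 x : x != t 0 -> anc (f (t 0)) (f x) -> ~~ anc (f x) (f (t 0)).
  by move=> x0 t0x; apply: contra x0 => /(anc_antisym t0x) /f_inj ->.
have edge_nbr p x : anc (f (t 0)) (f x) -> p \in e -> p != t 1 -> ~~ adj p x.
  move=> t0x; rewrite !inE => /orP[/eqP->|/eqP->]; last by rewrite eqxx.
  by move=> _; apply: contraTN t0x; apply: adj_incomparable.
(* [t 1] has arcs to [t 2] and [s 2]; the higher of the two lies outside the
   other hole and leaves the subtree through a neighbour other than [t 1]. *)
case/orP: (c_total s2_in t2_in) => [s2t2|t2s2].
- have [p pH /andP[p1 ps2]] := hole_walk_exit W s2H s2t2 (not_anc0 _ s2_neq0 t0s2).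
  have pe : p \in e.
    have := adj_H_petal eH pH (hw_mem Ws m'2) ps2.
    by rewrite (negbTE s2e).
  by have := edge_nbr p (s 2) t0s2 pe p1; rewrite ps2.
- have t2_s0 : ~~ anc (f (t 2)) (f (s 0)) by rewrite s0 not_anc0.
  have [p pC /andP[p1 pt2]] := hole_walk_exit Ws t2C t2s2 t2_s0.
  have pe : p \in e.
    rewrite adj_sym in pt2; have := adj_H_petal eH (hw_mem W m2) pC pt2.
    by rewrite (negbTE t2e) orbF.
  by have := edge_nbr p (t 2) t0t2 pe; rewrite -s1 pt2 => /(_ p1).
Qed.

Lemma petal_anc m t : hole_walk adj H m t -> has_desc H (t 0) ->
  exists a, [/\ a \in He [set t 0; t 1], a \notin H, a != t 0 & anc (f a) (f (t 0))].
Proof.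
move=> W H_desc; set e := [set t 0; t 1].
have [m0 m1] : 0 < m /\ 1 < m by have := hw_size W; split; lia.
have adj01 : adj (t 0) (t 1) := hw_adj W m0.
have eH : e \in hole_edges adj H := hole_edge_set2 (hw_mem W m0) (hw_mem W m1) adj01.
have C_hole := petal_hole eH.
have t0C : t 0 \in He e by rewrite (mem_edge_petal eH) // set21.
have [a aC a_desc] := hole_has_desc C_hole.
have a_neq0 : a != t 0.
  by apply: contraNneq (petal_no_desc W H_desc) => a0; rewrite -/e -a0.
have a_nadj0 : ~~ adj a (t 0).
  (* otherwise [t 1 -> t 0 -> a] with [a] above [t 1] *)
  apply/negP => a_adj0.
  have [m' [s [Ws s0 s1]]] := hole_walk_edge adj_sym C_hole aC t0C a_adj0.
  have t1C : t 1 \in He e by rewrite (mem_edge_petal eH) // set22.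
  have [j jm sj] := hw_onto Ws t1C.
  have s_desc : has_desc (He e) (s 0) by rewrite s0.
  have [s_mid a_in _] := hole_walk_apex Ws s_desc.
  rewrite s0 s1 in s_mid a_in.
  have [_ t0_in _] := hole_walk_apex W H_desc.
  have a_t1 : anc (f a) (f (t 1)).
    move: (hw_adj1 Ws jm); rewrite s1 sj => /(_ adj01) /orP[] /eqP j02.
      by rewrite -sj j02 s0 anc_refl.
    by rewrite -sj j02 s_mid // (hw_size Ws).
  by move: (arc_chain_not_anc t0_in a_in); rewrite a_t1.
have [m' [s [Ws s0]]] := hole_walk_from C_hole aC.
have [j jm sj] := hw_onto Ws t0C.
have [j1 jm1] : 1 < j /\ j.+1 < m'.
  by apply: (hw_nonadj0 adj_sym Ws jm); rewrite s0 sj // eq_sym.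
have s_desc : has_desc (He e) (s 0) by rewrite s0.
have [s_mid _ _] := hole_walk_apex Ws s_desc.
exists a; split=> //; last by rewrite -sj -s0 s_mid.
apply: contra a_nadj0 => aH.
have : a \in e by rewrite -(mem_H_petal _ eH) aH aC.
by rewrite !inE (negbTE a_neq0) => /eqP->; rewrite adj_sym.
Qed.

Lemma petal_anc_outside e e' a x x' : e \in hole_edges adj H -> e' \in hole_edges adj H ->
  e != e' -> e :&: e' = [set a] -> x \in He e -> x' \in He e' -> x' \notin H ->
  anc (f x') (f a) -> anc (f x') (f x).
Proof.
move=> eH e'H ee' ee'_a xe x'e' x'H x'a.
have ae : a \in e by have := set11 a; rewrite -ee'_a inE => /andP[].
have x'e : x' \notin He e.
  apply: contra x'H => x'e; have := mem_petals eH e'H ee' x'e x'e'.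
  by rewrite inE => /andP[/(mem_edge_H eH)].
apply: (hole_desc_all (petal_hole eH) x'e (mem_edge_petal eH ae) x'a) => // p pe.
apply/negP => px'; have pe' : p \in He e' by apply: petal_nbr e'H x'e' x'H _; rewrite adj_sym.
move: (mem_petals eH e'H ee' pe pe'); rewrite ee'_a inE => /eqP pa.
by rewrite pa adj_sym in px'; rewrite (negbTE (adj_incomparable px')) in x'a.
Qed.

Lemma flower_contradiction : False.
Proof.
have [a aH a_desc] := hole_has_desc H_hole.
have [m [t [W t0]]] := hole_walk_from H_hole aH; rewrite -t0 in a_desc.
have [m0 m1 mm one_neq_m1] : [/\ 0 < m, 1 < m, m - 1 < m & 1 != m - 1].
  by have := hw_size W; split; lia.
have [a1 [a1e1 a1H a1_neq0 a1t0]] := petal_anc W a_desc.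
have [a2 [a2e2 a2H a2_neq0 a2t0]] := petal_anc (hole_walk_rev adj_sym W) a_desc.
rewrite /rev_walk /= in a2e2 a2_neq0 a2t0.
set e1 := [set t 0; t 1] in a1e1; set e2 := [set t 0; t (m - 1)] in a2e2.
have e1H : e1 \in hole_edges adj H.
  by apply: hole_edge_set2; rewrite ?(hw_mem W) ?(hw_adj W).
have e2H : e2 \in hole_edges adj H.
  apply: hole_edge_set2; rewrite ?(hw_mem W) //.
  by rewrite adj_sym subn1 (hw_adj_last W).
have t1_neq_tm : t 1 != t (m - 1) by rewrite (hw_neq W).
have e12 : e1 :&: e2 = [set t 0].
  apply/setP => z; rewrite !inE -orb_andr.
  by case: (z =P t 1) => [->|_]; rewrite ?orbF // (negbTE t1_neq_tm) orbF.
have e1_neq_e2 : e1 != e2.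
  apply/eqP => E; have := set22 (t 0) (t 1); rewrite -/e1 E !inE (negbTE t1_neq_tm) orbF.
  by apply/eqP; rewrite eq_sym (hw_neq W).
have a2a1 := petal_anc_outside e1H e2H e1_neq_e2 e12 a1e1 a2e2 a2H a2t0.
have e2_neq_e1 : e2 != e1 by rewrite eq_sym.
have e21 : e2 :&: e1 = [set t 0] by rewrite setIC.
have a1a2 := petal_anc_outside e2H e1H e2_neq_e1 e21 a2e2 a1e1 a1H a1t0.
have a12 : a1 = a2 by apply: f_inj; apply: anc_antisym.
rewrite -a12 in a2e2; move: (mem_petals e1H e2H e1_neq_e2 a1e1 a2e2).
by rewrite e12 inE (negbTE a1_neq0).
Qed.

End Flower.

End BurlingGraph.
End BurlingTree.

Theorem lemma7p1 (V : finType) (adj : rel V) :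
  symmetric adj -> irreflexive adj -> flower adj -> ~ burling_graph adj.
Proof.
move=> adj_sym _ [H [He [H_hole petal_spec petals_meet _ petal_cover]]].
move=> [U [r [par [l [c [[par_root reach last_born c_empty c_branch] [f [f_inj adjE]]]]]]]].
exact: (flower_contradiction par_root reach last_born c_empty c_branch adj_sym
  f_inj adjE H_hole petal_spec petals_meet petal_cover).
Qed.
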